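(* Let $\lambda\in(0,1]$, $x=3\lambda/2$ and $y=(2\lambda-x)/2=\lambda/4$. Place a coordinate system with origin at a point $o$ ($x$-axis pointing East, $y$-axis pointing North) and consider the eight open squares with horizontal and vertical sides of side length $x$ centered at $(0,\pm(\lambda+x/2))$, $(\pm(\lambda+x/2),0)$, and $(\pm(x+y),\pm(\lambda+x/2))$ (all four sign combinations), i.e. the gadget $G(o)$. Let $S(o)$ be the convex hull of these eight squares, a square of side $3x+2y$ centered at $o$. Then for every point $a$ not in $S(o)$, the segment $ao$ meets the interior of at least one of the eight squares; in particular, if these squares are obstacles of a terrain, an agent located outside $S(o)$ cannot see $o$.
   Context: An agent at a point $a$ of a terrain sees a point $b$ only if the segment $ab$ is contained in the terrain (and has length at most $1$); obstacles are open sets removed from the terrain. *)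

From Stdlib Require Import Reals List.
Import ListNotations.
Open Scope R_scope.

Definition open_square (c : R * R) (s : R) (p : R * R) : Prop :=
  Rabs (fst p - fst c) < s / 2 /\ Rabs (snd p - snd c) < s / 2.

Definition gx (lam : R) : R := 3 * lam / 2.
Definition gy (lam : R) : R := (2 * lam - gx lam) / 2.

Definition gadget_centers (lam : R) (o : R * R) : list (R * R) :=
  let d := lam + gx lam / 2 in
  let e := gx lam + gy lam in
  map (fun v => (fst o + fst v, snd o + snd v))
    [ (0, d); (0, - d); (d, 0); (- d, 0);
      (e, d); (e, - d); (- e, d); (- e, - d) ].

Definition gadget (lam : R) (o : R * R) (p : R * R) : Prop :=
  exists c, In c (gadget_centers lam o) /\ open_square c (gx lam) p.

Definition S_hull (lam : R) (o : R * R) : R * R -> Prop :=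
  open_square o (3 * gx lam + 2 * gy lam).

Definition segpt (a b : R * R) (t : R) : R * R :=
  (fst a + t * (fst b - fst a), snd a + t * (snd b - snd a)).

(** The gadget is the 3 x 3 grid of open squares of side [x = 3λ/2] and pitch
    [d = λ + x/2 = x + y = 7λ/4] with the central square removed, and [S(o)]
    is the open square of half side [d + x/2 = 5λ/2]. By the symmetries of the
    grid we may assume that [a - o = (u, v)] with [v >= 5λ/2] and [|u| <= v].
    The line through [o] in direction [(r, 1)], [|r| <= 1], then crosses the
    top row of squares at a height [y < 5λ/2 <= v]: at [y = 21λ/20] through
    the middle square when [|r| < 7/10], and at [y = 9λ/4] through a corner
    square otherwise. *)

From Stdlib Require Import Reals List Lra.
Import ListNotations.
Open Scope R_scope.

Definition grid_step (i : R) : Prop := i = -1 \/ i = 0 \/ i = 1.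

Lemma grid_step_opp (i : R) : grid_step i -> grid_step (- i).
Proof. unfold grid_step; lra. Qed.

Lemma gadget_centers_grid (lam : R) (o : R * R) (i j : R) :
  grid_step i -> grid_step j -> ~ (i = 0 /\ j = 0) ->
  In (fst o + i * (7 * lam / 4), snd o + j * (7 * lam / 4)) (gadget_centers lam o).
Proof.
  unfold grid_step, gadget_centers, gy, gx; simpl.
  intros Hi Hj Hij.
  destruct Hi as [-> | [-> | ->]]; destruct Hj as [-> | [-> | ->]];
    try lra;
    repeat (first [solve [left; f_equal; lra] | right]).
Qed.

Lemma top_row_cover (lam r : R) : 0 < lam -> -1 <= r <= 1 ->
  exists y j, grid_step j /\ Rabs (y - 7 * lam / 4) < 3 * lam / 4 /\
    Rabs (r * y - j * (7 * lam / 4)) < 3 * lam / 4.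
Proof.
  unfold grid_step; intros Hlam Hr.
  destruct (Rlt_or_le r (- (7 / 10))) as [Hneg | Hneg];
    [| destruct (Rlt_or_le r (7 / 10)) as [Hpos | Hpos]].
  - exists (9 * lam / 4), (-1).
    split; [lra | split; apply Rabs_def1; nra].
  - exists (21 * lam / 20), 0.
    split; [lra | split; apply Rabs_def1; nra].
  - exists (9 * lam / 4), 1.
    split; [lra | split; apply Rabs_def1; nra].
Qed.

Definition meets_ring (lam u v : R) : Prop :=
  exists s i j, 0 <= s <= 1 /\ grid_step i /\ grid_step j /\ ~ (i = 0 /\ j = 0) /\
    Rabs (s * u - i * (7 * lam / 4)) < 3 * lam / 4 /\
    Rabs (s * v - j * (7 * lam / 4)) < 3 * lam / 4.

Lemma meets_ring_swap (lam u v : R) : meets_ring lam u v -> meets_ring lam v u.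
Proof.
  intros (s & i & j & Hs & Hi & Hj & Hij & Hu & Hv).
  exists s, j, i; tauto.
Qed.

Lemma meets_ring_oppr (lam u v : R) : meets_ring lam u (- v) -> meets_ring lam u v.
Proof.
  intros (s & i & j & Hs & Hi & Hj & Hij & Hu & Hv).
  exists s, i, (- j).
  do 5 (split; [first [assumption | now apply grid_step_opp | lra] |]).
  replace (s * v - - j * (7 * lam / 4)) with (- (s * - v - j * (7 * lam / 4))) by ring.
  now rewrite Rabs_Ropp.
Qed.

Lemma meets_ring_top (lam u v : R) : 0 < lam -> 5 * lam / 2 <= v -> Rabs u <= v ->
  meets_ring lam u v.
Proof.
  intros Hlam Hv Hu.
  assert (Hv0 : 0 < v) by lra.
  assert (Hinv : v * / v = 1) by (field; lra).
  assert (Hinv0 : 0 < / v) by (apply Rinv_0_lt_compat; lra).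
  assert (Hr : -1 <= u / v <= 1).
  { assert (-v <= u <= v) by (revert Hu; unfold Rabs; destruct (Rcase_abs u); lra).
    unfold Rdiv; split; nra. }
  destruct (top_row_cover lam (u / v) Hlam Hr) as (y & j & Hj & Hy & Hx).
  apply Rabs_def2 in Hy.
  exists (y / v), j, 1.
  split; [unfold Rdiv; split; nra |].
  split; [exact Hj |]. split; [unfold grid_step; lra |]. split; [lra |].
  split.
  - now replace (y / v * u) with (u / v * y) by (field; lra).
  - replace (y / v * v - 1 * (7 * lam / 4)) with (y - 7 * lam / 4) by (field; lra).
    apply Rabs_def1; lra.
Qed.

Lemma meets_ring_far (lam u v : R) : 0 < lam ->
  5 * lam / 2 <= Rmax (Rabs u) (Rabs v) -> meets_ring lam u v.
Proof.
  intros Hlam Hfar.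
  destruct (Rle_or_lt (Rabs u) (Rabs v)) as [Huv | Huv].
  - rewrite Rmax_right in Hfar by lra.
    destruct (Rle_or_lt 0 v) as [Hv | Hv].
    + rewrite (Rabs_pos_eq v) in Hfar, Huv by lra.
      now apply meets_ring_top.
    + rewrite (Rabs_left v) in Hfar, Huv by lra.
      now apply meets_ring_oppr, meets_ring_top.
  - rewrite Rmax_left in Hfar by lra.
    apply meets_ring_swap.
    destruct (Rle_or_lt 0 u) as [Hu | Hu].
    + rewrite (Rabs_pos_eq u) in Hfar, Huv by lra.
      apply meets_ring_top; lra.
    + rewrite (Rabs_left u) in Hfar, Huv by lra.
      apply meets_ring_oppr, meets_ring_top; lra.
Qed.

Lemma not_S_hull_far (lam : R) (o a : R * R) : ~ S_hull lam o a ->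
  5 * lam / 2 <= Rmax (Rabs (fst a - fst o)) (Rabs (snd a - snd o)).
Proof.
  unfold S_hull, open_square, gy, gx; intros Hout.
  apply Rnot_lt_le; intros Hnear; apply Hout.
  pose proof (Rmax_l (Rabs (fst a - fst o)) (Rabs (snd a - snd o))).
  pose proof (Rmax_r (Rabs (fst a - fst o)) (Rabs (snd a - snd o))).
  split; lra.
Qed.

Theorem lemma2p4 (lam : R) (o a : R * R) :
  0 < lam <= 1 ->
  ~ S_hull lam o a ->
  exists c, In c (gadget_centers lam o) /\
    exists t, 0 <= t <= 1 /\ open_square c (gx lam) (segpt a o t).
Proof.
  intros [Hlam _] Hout.
  destruct (meets_ring_far lam _ _ Hlam (not_S_hull_far lam o a Hout))
    as (s & i & j & Hs & Hi & Hj & Hij & Hu & Hv).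
  exists (fst o + i * (7 * lam / 4), snd o + j * (7 * lam / 4)).
  split; [now apply gadget_centers_grid |].
  exists (1 - s); split; [lra |].
  unfold open_square, segpt, gx; simpl.
  replace (3 * lam / 2 / 2) with (3 * lam / 4) by field.
  split.
  - now replace (fst a + (1 - s) * (fst o - fst a) - (fst o + i * (7 * lam / 4)))
      with (s * (fst a - fst o) - i * (7 * lam / 4)) by ring.
  - now replace (snd a + (1 - s) * (snd o - snd a) - (snd o + j * (7 * lam / 4)))
      with (s * (snd a - snd o) - j * (7 * lam / 4)) by ring.
Qed.
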